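(* Fix $T>0$ and $v_f=\psi_m$ for some $m\in\{0,\dots,2J\}$. Consider the linear ODE $$\frac{d}{dt}v_t=(-iF_y-F_z^2+CF_z)v_t,\qquad v_0\in\mathbb{C}^N\setminus\{0\}.$$ For all sufficiently large real constants $C$, for every $v_0\ne0$ there exists $t\in[0,T]$ such that $v_t^*v_f\ne0$.
   Context: $2J\in\mathbb{N}$, $J>0$, $N=2J+1$; $\{\psi_k\}_{k=0}^{2J}$ standard basis of $\mathbb{C}^N$; $F_y\psi_k=ic_{k-J}\psi_{k+1}-ic_{J-k}\psi_{k-1}$, $F_z\psi_k=(k-J)\psi_k$, $c_m=\tfrac12\sqrt{(J-m)(J+m+1)}$. *)

From HB Require Import structures.
From mathcomp Require Import all_boot all_order all_algebra.
From mathcomp Require Import all_classical all_reals all_analysis.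
From mathcomp Require Import complex.
Set Implicit Arguments. Unset Strict Implicit. Unset Printing Implicit Defensive.
Import Order.TTheory GRing.Theory Num.Theory.
Local Open Scope ring_scope.

(* Spin J with 2J = n (n : nat, n > 0 imposed in the theorem); dimension N = n+1 = 2J+1.
   Basis vectors psi_k, k = 0..2J, are indexed by 'I_(n.+1). *)
Section Spin.
Variables (R : realType) (n : nat).

Definition spinJ : R := n%:R / 2.

Definition cc (m : R) : R := 2^-1 * Num.sqrt ((spinJ - m) * (spinJ + m + 1)).

Definition psi (k : 'I_n.+1) : 'cV[R[i]]_n.+1 := delta_mx k 0.

(* F_y psi_k = i c_{k-J} psi_{k+1} - i c_{J-k} psi_{k-1}, i.e. column k of F_y *)
Definition Fy : 'M[R[i]]_n.+1 :=
  \matrix_(a, k)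
    (if a == k.+1 :> nat then 'i%C * (cc (k%:R - spinJ))%:C%C
     else if a.+1 == k :> nat then - ('i%C * (cc (spinJ - k%:R))%:C%C)
     else 0).

Definition Fz : 'M[R[i]]_n.+1 :=
  \matrix_(a, k) (if a == k then (k%:R - spinJ)%:C%C else 0).

Definition gen (C : R) : 'M[R[i]]_n.+1 :=
  - ('i%C *: Fy) - Fz *m Fz + (C%:C%C) *: Fz.

Definition solves (C : R) (v : R -> 'cV[R[i]]_n.+1) : Prop :=
  forall (k : 'I_n.+1) (t : R),
    is_derive t 1 (fun s => @complex.Re R (v s k 0)) (@complex.Re R ((gen C *m v t) k 0)) /\
    is_derive t 1 (fun s => @complex.Im R (v s k 0)) (@complex.Im R ((gen C *m v t) k 0)).

Definition adj (p q : nat) (A : 'M[R[i]]_(p, q)) : 'M[R[i]]_(q, p) :=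
  (map_mx (@conjc R) A)^T.

End Spin.

From HB Require Import structures.
From mathcomp Require Import all_boot all_order all_algebra.
From mathcomp Require Import all_classical all_reals all_analysis.
From mathcomp Require Import complex.
From mathcomp Require Import ring lra zify.
Set Implicit Arguments. Unset Strict Implicit. Unset Printing Implicit Defensive.
Import Order.TTheory GRing.Theory Num.Theory numFieldNormedType.Exports.
Local Open Scope classical_set_scope.
Local Open Scope ring_scope.

(* If psi_m^* v_t vanished on [0, T], differentiating at t = 0 would give
   (G^k v_0)_m = 0 for all k, where G = -iF_y - F_z^2 + C F_z; the nonzero
   G-invariant space spanned by the G^k v_0 then contains an eigenvector x of G
   with x_m = 0.  But G is tridiagonal with nonzero off-diagonal entries, so an
   eigenvector vanishing at m and at every index on one side of m vanishes
   identically.  Otherwise the coordinates of largest modulus x_i (i < m) and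
   x_j (j > m) place the diagonal entries d_i and d_j within the Gershgorin
   radius of the same eigenvalue, which is impossible once C is so large that
   the diagonal d_k = -(k-J)^2 + C(k-J) is spread out by more than twice the
   off-diagonal norm. *)

Section KrylovEigenvector.
Variables (F : closedFieldType) (N : nat) (A : 'M[F]_N.+1) (m : 'I_N.+1).

Definition krylov_coord0 (w : 'cV[F]_N.+1) := forall k, (A ^+ k *m w) m 0 = 0.

Lemma krylov_coord0_shift z w : krylov_coord0 w -> krylov_coord0 ((A - z%:M) *m w).
Proof.
move=> w0 k; rewrite mulmxA mulmxBr mul_mx_scalar mulmxBl -scalemxAl.
have -> : A ^+ k *m A = A ^+ k.+1 by rewrite exprSr mulmxE.
by rewrite mxE w0 add0r mxE mxE w0 mulr0 oppr0.
Qed.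

Lemma krylov_coord0_prod (s : seq F) w :
  krylov_coord0 w -> krylov_coord0 ((\prod_(z <- s) (A - z%:M)) *m w).
Proof.
elim: s w => [|z s IH] w w0; first by rewrite big_nil mul1mx.
by rewrite big_cons -mulmxE -mulmxA; apply/krylov_coord0_shift/IH.
Qed.

(* Applying the factors of the product to w one at a time, the last nonzero
   intermediate vector is an eigenvector. *)
Lemma eigenvector_of_annihilator (s : seq F) w :
  krylov_coord0 w -> w != 0 -> (\prod_(z <- s) (A - z%:M)) *m w = 0 ->
  exists (lam : F) (x : 'cV[F]_N.+1), [/\ x != 0, A *m x = lam *: x & x m 0 = 0].
Proof.
elim: s w => [|z s IH] w w0 w_neq0.
  by rewrite big_nil mul1mx => /eqP; rewrite (negbTE w_neq0).
rewrite big_cons -mulmxE -mulmxA.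
set x := (\prod_(z <- s) (A - z%:M)) *m w.
have [x0|x_neq0] := eqVneq x 0; first by move=> _; exact: IH x0.
move=> zx; exists z, x; split => //.
  by apply/eqP; rewrite -subr_eq0 -mul_scalar_mx -mulmxBl zx.
by have := krylov_coord0_prod s w0 0; rewrite expr0 mul1mx.
Qed.

Lemma krylov_coord0_eigenvector w : w != 0 -> krylov_coord0 w ->
  exists (lam : F) (x : 'cV[F]_N.+1), [/\ x != 0, A *m x = lam *: x & x m 0 = 0].
Proof.
move=> w_neq0 w0; have [r char_prod] := closed_field_poly_normal (char_poly A).
have := Cayley_Hamilton A.
rewrite char_prod (monicP (char_poly_monic A)) scale1r rmorph_prod.
have -> : \prod_(z <- r) horner_mx A ('X - z%:P) = \prod_(z <- r) (A - z%:M).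
  by apply: eq_bigr => z _; rewrite rmorphB /= horner_mx_X horner_mx_C.
move=> CH; apply: (eigenvector_of_annihilator w0 w_neq0 (s := r)).
by rewrite CH mul0mx.
Qed.

End KrylovEigenvector.

Section EigenvectorCoordinates.
Variables (F : numDomainType) (N : nat) (A : 'M[F]_N.+1).

Definition gersh_radius (i : 'I_N.+1) : F := \sum_(k | k != i) `|A i k|.

Variables (x : 'cV[F]_N.+1) (lam : F).
Hypothesis eigAx : A *m x = lam *: x.

Lemma eigen_row i : \sum_k A i k * x k 0 = lam * x i 0.
Proof. by have /matrixP/(_ i 0) := eigAx; rewrite !mxE. Qed.

Lemma eigen_coord0_step i j : x i 0 = 0 -> A i j != 0 ->
  (forall k, k != j -> A i k * x k 0 = 0) -> x j 0 = 0.
Proof.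
move=> xi Aij others; have := eigen_row i.
rewrite xi mulr0 (bigD1 j) //= big1 ?addr0 => [/eqP|]; last exact: others.
by rewrite mulf_eq0 (negbTE Aij) => /eqP.
Qed.

Lemma gershgorin_max_coord i : x i 0 != 0 ->
  (forall k, k != i -> A i k != 0 -> `|x k 0| <= `|x i 0|) ->
  `|A i i - lam| <= gersh_radius i.
Proof.
move=> xi xmax; have xi_gt0 : 0 < `|x i 0| by rewrite normr_gt0.
have row : (lam - A i i) * x i 0 = \sum_(k | k != i) A i k * x k 0.
  by rewrite mulrBl -eigen_row (bigD1 i) //= addrC addrK.
rewrite distrC -(ler_pM2r xi_gt0) -normrM row /gersh_radius mulr_suml.
apply: le_trans (ler_norm_sum _ _ _) (ler_sum _ _) => k ki.
rewrite normrM; have [->|Aik] := eqVneq (A i k) 0; first by rewrite normr0 !mul0r.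
by rewrite ler_wpM2l ?xmax.
Qed.

Lemma max_norm_coord (P : pred 'I_N.+1) i0 : P i0 -> x i0 0 != 0 ->
  exists i, [/\ P i, x i 0 != 0 & forall k, P k -> `|x k 0| <= `|x i 0|].
Proof.
move=> Pi0 xi0; have [k _|i Pi imax] := real_arg_maxP (F := fun k => `|x k 0|) Pi0.
  exact: normr_real.
exists i; split=> //; rewrite -normr_gt0 (lt_le_trans _ (imax _ Pi0)) //.
by rewrite normr_gt0.
Qed.

Hypothesis A_tridiag : forall i k : 'I_N.+1, (i.+1 < k)%N || (k.+1 < i)%N -> A i k = 0.
Hypothesis A_adjacent : forall i k : 'I_N.+1, (i.+1 == k)%N || (k.+1 == i)%N -> A i k != 0.

Lemma tridiag_neighbour i k : A i k != 0 -> (k <= i.+1)%N && (i <= k.+1)%N.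
Proof.
apply: contraR; rewrite negb_and -!ltnNge => far.
by rewrite A_tridiag.
Qed.

Lemma tridiag_eigen_prefix0 (i : 'I_N.+1) :
  (forall k : 'I_N.+1, (k <= i)%N -> x k 0 = 0) -> x = 0.
Proof.
move=> x_pre; suff x0 : forall d (k : 'I_N.+1), (k <= d)%N -> x k 0 = 0.
  by apply/matrixP => k l; rewrite ord1 mxE (x0 N) // -ltnS.
elim=> [|d IH] k kd; first by apply: x_pre; lia.
have [|dk] := leqP k d; first exact: IH.
have [|ik] := leqP k i; first exact: x_pre.
have kN := ltn_ord k; have pN : (k.-1 < N.+1)%N by lia.
pose p := Ordinal pN; apply: (eigen_coord0_step (i := p) (j := k)).
- by apply: IH => /=; lia.
- by apply: A_adjacent; apply/orP; left; apply/eqP => /=; lia.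
move=> l /eqP lk; have [->|/tridiag_neighbour /andP[lp _]] := eqVneq (A p l) 0.
  by rewrite mul0r.
have {}lk : (l : nat) <> k by move=> e; apply: lk; exact: val_inj.
by rewrite IH ?mulr0 //; move: lp; rewrite /p /=; lia.
Qed.

Lemma tridiag_eigen_suffix0 (i : 'I_N.+1) :
  (forall k : 'I_N.+1, (i <= k)%N -> x k 0 = 0) -> x = 0.
Proof.
move=> x_suf; suff x0 : forall d (k : 'I_N.+1), (N - d <= k)%N -> x k 0 = 0.
  by apply/matrixP => k l; rewrite ord1 mxE (x0 N) // subnn.
have iN := ltn_ord i.
elim=> [|d IH] k kd; have kN := ltn_ord k; first by apply: x_suf; lia.
have [|dk] := leqP (N - d) k; first exact: IH.
have [|ki] := leqP i k; first exact: x_suf.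
have pN : (k.+1 < N.+1)%N by lia.
pose p := Ordinal pN; apply: (eigen_coord0_step (i := p) (j := k)).
- by apply: IH => /=; lia.
- by apply: A_adjacent; apply/orP; right; apply/eqP => /=; lia.
move=> l /eqP lk; have [->|/tridiag_neighbour /andP[_ pl]] := eqVneq (A p l) 0.
  by rewrite mul0r.
have {}lk : (l : nat) <> k by move=> e; apply: lk; exact: val_inj.
by rewrite IH ?mulr0 //; move: pl; rewrite /p /=; lia.
Qed.

Lemma tridiag_eigen_coord_neq0 (m : 'I_N.+1) :
  (forall i j : 'I_N.+1, (i < m < j)%N ->
     gersh_radius i + gersh_radius j < `|A i i - A j j|) ->
  x m 0 = 0 -> x = 0.
Proof.
move=> sep xm.
have [/existsP[i0 /andP[i0m xi0]]|/existsPn below] :=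
  boolP [exists k : 'I_N.+1, (k <= m)%N && (x k 0 != 0)]; last first.
  apply: (@tridiag_eigen_prefix0 m) => k km.
  by move: (below k); rewrite km negbK => /eqP.
have [/existsP[j0 /andP[mj0 xj0]]|/existsPn above] :=
  boolP [exists k : 'I_N.+1, (m <= k)%N && (x k 0 != 0)]; last first.
  apply: (@tridiag_eigen_suffix0 m) => k mk.
  by move: (above k); rewrite mk negbK => /eqP.
have [i [/= im xi imax]] := @max_norm_coord [pred k : 'I_N.+1 | (k <= m)%N] _ i0m xi0.
have [j [/= mj xj jmax]] := @max_norm_coord [pred k : 'I_N.+1 | (m <= k)%N] _ mj0 xj0.
have ne_m k : x k 0 != 0 -> (k : nat) <> m.
  by move=> xk e; move: xk; rewrite (_ : k = m) ?xm ?eqxx //; exact: val_inj.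
have {im} im : (i < m)%N by have := ne_m _ xi; lia.
have {mj} mj : (m < j)%N by have := ne_m _ xj; lia.
have gi : `|A i i - lam| <= gersh_radius i.
  apply: gershgorin_max_coord xi _ => k _ /tridiag_neighbour /andP[ki _].
  by apply: imax => /=; lia.
have gj : `|A j j - lam| <= gersh_radius j.
  apply: gershgorin_max_coord xj _ => k _ /tridiag_neighbour /andP[_ jk].
  by apply: jmax => /=; lia.
have /lt_geF/negbT/negP[] : gersh_radius i + gersh_radius j < `|A i i - A j j|.
  by apply: sep; rewrite im mj.
by apply: le_trans (ler_distD lam _ _) _; rewrite (distrC lam); exact: lerD.
Qed.

End EigenvectorCoordinates.

Section ComplexDerivative.
Variable R : realType.

Definition complex_derive (f : R -> R[i]) (t : R) (d : R[i]) :=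
  is_derive t 1 (fun s => complex.Re (f s)) (complex.Re d) /\
  is_derive t 1 (fun s => complex.Im (f s)) (complex.Im d).

Lemma complex_deriveZ (a : R[i]) f t d :
  complex_derive f t d -> complex_derive (fun s => a * f s) t (a * d).
Proof.
case: a => a b [dRe dIm]; split.
- have -> : (fun s => complex.Re ((a +i* b)%C * f s)) =
            a \*: (fun s => complex.Re (f s)) - b \*: (fun s => complex.Im (f s)).
    by apply/funext => s; rewrite !fctE /GRing.scale_fun /=; case: (f s).
  by case: d dRe dIm => c e /= dRe dIm; apply: is_deriveB; apply: is_deriveZ.
- have -> : (fun s => complex.Im ((a +i* b)%C * f s)) =
            a \*: (fun s => complex.Im (f s)) + b \*: (fun s => complex.Re (f s)).
    by apply/funext => s; rewrite !fctE /GRing.scale_fun /=; case: (f s).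
  by case: d dRe dIm => c e /= dRe dIm; apply: is_deriveD; apply: is_deriveZ.
Qed.

Lemma complex_derive_sum (N : nat) (f : 'I_N -> R -> R[i]) t (d : 'I_N -> R[i]) :
  (forall j, complex_derive (f j) t (d j)) ->
  complex_derive (fun s => \sum_j f j s) t (\sum_j d j).
Proof.
move=> df; rewrite /complex_derive !raddf_sum.
have -> : (fun s => complex.Re (\sum_j f j s)) = \sum_j (fun s => complex.Re (f j s)).
  by apply/funext => s; rewrite fct_sumE raddf_sum.
have -> : (fun s => complex.Im (\sum_j f j s)) = \sum_j (fun s => complex.Im (f j s)).
  by apply/funext => s; rewrite fct_sumE raddf_sum.
by split; apply: is_derive_sum => j; apply df.
Qed.

Lemma is_derive_eq0_right (f : R -> R) (t e d : R) : 0 < e ->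
  (forall s, t <= s < t + e -> f s = 0) -> is_derive t 1 f d -> d = 0.
Proof.
move=> e0 f0 /is_derive1_caratheodory [g [gE gc gt]].
have g0 : \forall z \near t^'+, g z = 0.
  near=> z.
  have tz : t < z by near: z; exact: nbhs_right_gt.
  have ze : z < t + e by near: z; apply: nbhs_right_lt; rewrite ltrDl.
  have := gE z; rewrite !f0 ?lexx ?ltrDl ?(ltW tz) ?ze // subr0 => /esym/eqP.
  by rewrite mulf_eq0 subr_eq0 (gt_eqF tz) orbF => /eqP.
have g_right : g z @[z --> t^'+] --> d by rewrite -gt; exact: cvg_at_right_filter.
have g_zero : g z @[z --> t^'+] --> 0 by exact: cvg_near_cst.
exact: (cvg_unique (@Rhausdorff R) g_right g_zero).
Unshelve. all: by end_near.
Qed.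

Lemma complex_derive_eq0_right f t e d : 0 < e ->
  (forall s, t <= s < t + e -> f s = 0) -> complex_derive f t d -> d = 0.
Proof.
move=> e0 f0; case: d => a b [/= dRe dIm].
have Re0 s : t <= s < t + e -> complex.Re (f s) = 0 by move/f0 ->.
have Im0 s : t <= s < t + e -> complex.Im (f s) = 0 by move/f0 ->.
by rewrite (is_derive_eq0_right e0 Re0 dRe) (is_derive_eq0_right e0 Im0 dIm).
Qed.

End ComplexDerivative.

Section LinearODE.
Variables (R : realType) (N : nat) (A : 'M[R[i]]_N.+1) (v : R -> 'cV[R[i]]_N.+1).

Definition solves_mx := forall k t, complex_derive (fun s => v s k 0) t ((A *m v t) k 0).

Hypothesis solves_v : solves_mx.

Lemma complex_derive_coord (B : 'M[R[i]]_N.+1) k t :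
  complex_derive (fun s => (B *m v s) k 0) t ((B *m A *m v t) k 0).
Proof.
under [fun s => _]funext do rewrite mxE.
rewrite -mulmxA mxE; apply: complex_derive_sum => j; exact/complex_deriveZ/solves_v.
Qed.

Lemma krylov_coord0_of_solution (T : R) (m : 'I_N.+1) : 0 < T ->
  (forall t, 0 <= t <= T -> v t m 0 = 0) ->
  forall t, 0 <= t < T -> krylov_coord0 A m (v t).
Proof.
move=> T0 vm0 t /andP[t0 tT] k; elim: k t t0 tT => [|k IH] t t0 tT.
  by rewrite expr0 mul1mx vm0 // t0 ltW.
rewrite exprSr -mulmxE.
apply: (complex_derive_eq0_right (e := T - t) _ _ (complex_derive_coord _ m t)).
- by rewrite subr_gt0.
- by move=> s /andP[ts]; rewrite addrC subrK => sT; apply: IH; rewrite ?(le_trans t0 ts).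
Qed.

End LinearODE.

Section SpinGenerator.
Variables (R : realType) (n : nat).
Local Notation J := (spinJ R n).
Local Notation Fy := (Fy R n).

Definition fz_diag (k : 'I_n.+1) : R := k%:R - J.
Definition gen_diag (C : R) (k : 'I_n.+1) : R := - fz_diag k ^+ 2 + C * fz_diag k.

Lemma spinJ_double : J + J = n%:R.
Proof. by rewrite -splitr. Qed.

Lemma norm_i : `|'i%C : R[i]| = 1.
Proof.
have i2 : `|'i%C : R[i]| ^+ 2 = 1 by rewrite -normrX sqr_i normrN1.
move/eqP: i2 (normr_ge0 ('i%C : R[i])); rewrite sqrf_eq1 => /orP[/eqP //|/eqP ->].
by rewrite oppr_ge0 ler10.
Qed.

Lemma i_neq0 : 'i%C != 0 :> R[i].
Proof. by rewrite -normr_eq0 norm_i oner_eq0. Qed.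

Lemma normc_real (r : R) : `|r%:C%C| = `|r|%:C%C.
Proof.
have [r0|r0] := leP 0 r; first by rewrite !ger0_norm // ler0c.
by rewrite !ltr0_norm ?rmorphN // ltcE /= eqxx.
Qed.

Lemma cc_neq0 (y : R) : - J - 1 < y < J -> (cc n y)%:C%C != 0.
Proof.
move=> /andP[lo hi]; rewrite (inj_eq (@complexI R)) /cc mulf_neq0 ?invr_eq0 ?pnatr_eq0 //.
by rewrite gt_eqF // sqrtr_gt0 mulr_gt0 //; lra.
Qed.

Lemma Fy_diag i : Fy i i = 0.
Proof. by rewrite mxE eqn_leq ltnn /= andbF eqn_leq ltnn. Qed.

Lemma Fy_far (i k : 'I_n.+1) : (i.+1 < k)%N || (k.+1 < i)%N -> Fy i k = 0.
Proof.
move=> far; rewrite mxE ifF; last by apply/eqP; move: far => /orP[]; lia.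
by rewrite ifF //; apply/eqP; move: far => /orP[]; lia.
Qed.

Lemma Fy_adjacent (i k : 'I_n.+1) : (i.+1 == k)%N || (k.+1 == i)%N -> Fy i k != 0.
Proof.
have J2 := spinJ_double; have k0 : 0 <= k%:R :> R := ler0n _ _.
have kn : k%:R <= n%:R :> R by rewrite ler_nat -ltnS.
rewrite mxE => /orP[/eqP ik|/eqP ki].
  rewrite ifF ?ik ?eqxx; last by apply/eqP; lia.
  have k1 : 1 <= k%:R :> R by rewrite ler1n -ik.
  by rewrite oppr_eq0 mulf_neq0 ?i_neq0 // cc_neq0 //; apply/andP; split; lra.
have kn' : k%:R + 1 <= n%:R :> R by rewrite natr1 ler_nat ki -ltnS.
by rewrite -ki eqxx mulf_neq0 ?i_neq0 // cc_neq0 //; apply/andP; split; lra.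
Qed.

Lemma genE (C : R) i k :
  gen n C i k = (if i == k then (gen_diag C i)%:C%C else 0) - 'i%C * Fy i k.
Proof.
rewrite !mxE (bigD1 i) //= big1 => [|l /negbTE li]; last by rewrite !mxE eq_sym li mul0r.
rewrite !mxE eqxx addr0.
have [<-|ik] := eqVneq i k; last by rewrite !mulr0 subr0 addr0 add0r.
by rewrite /gen_diag /fz_diag; ring.
Qed.

Lemma gen_diagE (C : R) i : gen n C i i = (gen_diag C i)%:C%C.
Proof. by rewrite genE eqxx Fy_diag mulr0 subr0. Qed.

Lemma gen_offdiagE (C : R) i k : i != k -> gen n C i k = - ('i%C * Fy i k).
Proof. by move=> ik; rewrite genE (negbTE ik) sub0r. Qed.

Lemma gen_tridiag (C : R) (i k : 'I_n.+1) : (i.+1 < k)%N || (k.+1 < i)%N -> gen n C i k = 0.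
Proof.
move=> far; rewrite gen_offdiagE ?Fy_far ?mulr0 ?oppr0 //.
by apply/eqP => ik; move: far; rewrite ik => /orP[]; lia.
Qed.

Lemma gen_adjacent (C : R) (i k : 'I_n.+1) :
  (i.+1 == k)%N || (k.+1 == i)%N -> gen n C i k != 0.
Proof.
move=> adj; rewrite gen_offdiagE ?oppr_eq0 ?mulf_neq0 ?i_neq0 ?Fy_adjacent //.
by apply/eqP => ik; move: adj; rewrite ik => /orP[] /eqP; lia.
Qed.

Definition fy_norm : R[i] := \sum_a \sum_k `|Fy a k|.

Lemma fy_norm_ge0 : 0 <= fy_norm.
Proof. by rewrite sumr_ge0 // => a _; rewrite sumr_ge0. Qed.

Lemma gersh_radius_gen (C : R) i : gersh_radius (gen n C) i <= fy_norm.
Proof.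
have -> : gersh_radius (gen n C) i = \sum_k `|Fy i k|.
  rewrite [RHS](bigD1 i) //= Fy_diag normr0 add0r; apply: eq_bigr => k ki.
  by rewrite gen_offdiagE 1?eq_sym // normrN normrM norm_i mul1r.
rewrite /fy_norm [X in _ <= X](bigD1 i) //= lerDl.
by rewrite sumr_ge0 // => a _; rewrite sumr_ge0.
Qed.

Definition spin_threshold : R := n%:R + 2 * complex.Re fy_norm + 1.

Lemma gen_diag_gap (C : R) (i j : 'I_n.+1) : n%:R <= C -> (i < j)%N ->
  C - n%:R + 1 <= gen_diag C j - gen_diag C i.
Proof.
move=> nC ij; have J2 := spinJ_double.
have ij' : i%:R + 1 <= j%:R :> R by rewrite natr1 ler_nat.
have jn : j%:R <= n%:R :> R by rewrite ler_nat -ltnS.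
have -> : gen_diag C j - gen_diag C i =
          (fz_diag j - fz_diag i) * (C - fz_diag i - fz_diag j) by rewrite /gen_diag; ring.
rewrite /fz_diag; nra.
Qed.

Lemma gen_eigen_coord_neq0 (C : R) (m : 'I_n.+1) (x : 'cV[R[i]]_n.+1) (lam : R[i]) :
  spin_threshold <= C -> gen n C *m x = lam *: x -> x m 0 = 0 -> x = 0.
Proof.
move=> hC eig; apply: (tridiag_eigen_coord_neq0 eig (gen_tridiag C) (gen_adjacent C)).
move=> i j /andP[im mj]; have ij := ltn_trans im mj.
have normE : fy_norm = (complex.Re fy_norm)%:C%C.
  by rewrite RRe_real // ger0_real // fy_norm_ge0.
have K0 : 0 <= complex.Re fy_norm by rewrite -ler0c -normE fy_norm_ge0.
apply: le_lt_trans (lerD (gersh_radius_gen C i) (gersh_radius_gen C j)) _.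
rewrite !gen_diagE -rmorphB normc_real distrC normE -rmorphD ltcR.
rewrite /spin_threshold in hC; have nC : n%:R <= C by lra.
by have gap := gen_diag_gap nC ij; rewrite ger0_norm; lra.
Qed.

End SpinGenerator.

Lemma adj_mul_psi00 (R : realType) (n : nat) (w : 'cV[R[i]]_n.+1) (m : 'I_n.+1) :
  (adj w *m psi R m) 0 0 = (w m 0)^*%C.
Proof.
rewrite mxE (bigD1 m) //= big1 => [|k /negbTE km]; last by rewrite !mxE km mulr0.
by rewrite !mxE eqxx mulr1 addr0.
Qed.

Theorem lemma4p3 (R : realType) (n : nat) (hn : (0 < n)%N) (T : R) (hT : 0 < T)
    (m : 'I_n.+1) :
  exists C0 : R, forall C : R, C0 <= C ->
    forall v : R -> 'cV[R[i]]_n.+1,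
      solves C v -> v 0 != 0 ->
      exists t : R, 0 <= t <= T /\ adj (v t) *m psi R m != 0.
Proof.
exists (spin_threshold R n) => C hC v hv v0; apply: contrapT => no_t.
have vm0 t : 0 <= t <= T -> v t m 0 = 0.
  move=> tT; apply/eqP; rewrite -conjc_eq0 -adj_mul_psi00.
  apply: contraT => ne; case: no_t; exists t; split=> //.
  by apply: contraNneq ne => ->; rewrite mxE.
have v0_krylov : krylov_coord0 (gen n C) m (v 0).
  by apply: (krylov_coord0_of_solution (hv : solves_mx (gen n C) v) hT vm0); rewrite lexx.
have [lam [x [x_neq0 eig xm]]] := krylov_coord0_eigenvector v0 v0_krylov.
by move: x_neq0; rewrite (gen_eigen_coord_neq0 hC eig xm) eqxx.
Qed.
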